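(* Let $d \ge 1$, let $\mathcal{V}^s$ be a finite nonempty set (the source vocabulary) with embeddings $e_k^s \in \mathbb{R}^d$ for $k \in \mathcal{V}^s$, and let $\mathcal{V}^t$ be a finite set disjoint from $\mathcal{V}^s$ (the added target vocabulary) with embeddings $e_k^t \in \mathbb{R}^d$ for $k \in \mathcal{V}^t$. Suppose that $$\sup_{k \in \mathcal{V}^t} h^{\top} e_k^t \;\le\; \sup_{k \in \mathcal{V}^s} h^{\top} e_k^s \qquad \text{for all } h \in \mathbb{R}^d.$$ Then $\{e_k^t : k \in \mathcal{V}^t\}$ is a good initialization, i.e. for every prefix representation $h \in H$, the greedily decoded next word of the expanded model equals that of the source model: $\operatorname{argmax}_{j \in \mathcal{V}^s} p^s(j \mid h) = \operatorname{argmax}_{j \in \mathcal{V}^s \cup \mathcal{V}^t} p^t(j \mid h)$.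
   Context: Setting: a language model maps a prefix (sequence of words) to a representation $h \in \mathbb{R}^d$ via a fixed map $\phi$ whose parameters are unchanged by vocabulary expansion. Let $H \subseteq \mathbb{R}^d$ be the set of representations $h = \phi(w_1,\dots,w_{i-1})$ of prefixes all of whose words lie in $\mathcal{V}^s$. The source model's next-word distribution is $p^s(j \mid h) = \exp(h^\top e_j^s)/\sum_{k \in \mathcal{V}^s}\exp(h^\top e_k^s)$ for $j \in \mathcal{V}^s$; the expanded model's is $p^t(j \mid h) = \exp(h^\top e_j)/\sum_{k \in \mathcal{V}^s \cup \mathcal{V}^t}\exp(h^\top e_k)$ for $j \in \mathcal{V}^s\cup\mathcal{V}^t$, where $e_j = e_j^s$ for $j \in \mathcal{V}^s$ and $e_j = e_j^t$ for $j \in \mathcal{V}^t$. Greedy decoding outputs the argmax. Tie-breaking convention: argmax uses a fixed ordering of $\mathcal{V}^s$ (the same in both models), and in the expanded model every word of $\mathcal{V}^s$ precedes every word of $\mathcal{V}^t$, ties being broken in favor of the earliest word. An initialization $\{e_k^t\}$ is called good if the two greedy outputs coincide for every $h \in H$. *)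

From HB Require Import structures.
From mathcomp Require Import all_boot all_order all_algebra.
From mathcomp Require Import all_classical all_reals all_analysis.
Set Implicit Arguments. Unset Strict Implicit. Unset Printing Implicit Defensive.
Import Order.TTheory GRing.Theory Num.Theory.
Local Open Scope ring_scope.

Section Defs.
Variables (R : realType) (d : nat).

Definition dotp (h e : 'rV[R]_d) : R := \sum_(i < d) h 0 i * e 0 i.

Definition softmax (V : finType) (e : V -> 'rV[R]_d) (h : 'rV[R]_d) (j : V) : R :=
  expR (dotp h (e j)) / \sum_(k : V) expR (dotp h (e k)).

Definition is_greedy (V : finType) (before : rel V) (f : V -> R) (j : V) : bool :=
  [forall k, (f k < f j) || ((f k == f j) && before j k)].

(* greedy decoding: the argmax of f, ties broken in favor of the earliest word *)
Definition greedy (V : finType) (before : rel V) (f : V -> R) : option V :=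
  [pick j | is_greedy before f j].
End Defs.

Definition rank_le (V : finType) (rk : V -> nat) : rel V := fun a b => (rk a <= rk b)%N.

(* expanded ordering: every source word precedes every added word *)
Definition sum_le (S T : finType) (rS : S -> nat) (rT : T -> nat) : rel (S + T) :=
  fun a b => match a, b with
  | inl x, inl y => (rS x <= rS y)%N
  | inl _, inr _ => true
  | inr _, inl _ => false
  | inr x, inr y => (rT x <= rT y)%N
  end.

Definition sum_emb (R : realType) (d : nat) (S T : finType)
  (es : S -> 'rV[R]_d) (et : T -> 'rV[R]_d) (k : S + T) : 'rV[R]_d :=
  match k with inl x => es x | inr y => et y end.

From HB Require Import structures.
From mathcomp Require Import all_boot all_order all_algebra.
From mathcomp Require Import all_classical all_reals all_analysis.
Import Order.TTheory GRing.Theory Num.Theory.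
Local Open Scope ring_scope.

(* Softmax is a strictly increasing transform of the logits h^T e_k, so greedy
   decoding only sees the logits.  Take the source argmax j with the smallest
   rank; every source logit is at most h^T e_j, and by the hypothesis on the
   suprema so is every added logit.  Since every source word precedes every
   added word, inl j is still the earliest maximiser in the expanded
   vocabulary, and greedy decoding picks it by uniqueness of the earliest
   maximiser. *)

Section Greedy.
Context {R : realType} {V : finType} {before : rel V}.

Lemma is_greedy_ub {f : V -> R} {j : V} :
  is_greedy before f j -> forall k, f k <= f j.
Proof.
by move=> /forallP gj k; case/orP: (gj k) => [/ltW //|/andP[/eqP-> _]].
Qed.

Lemma is_greedy_comp_mono (g : R -> R) (f : V -> R) j :
  {mono g : x y / x <= y} -> is_greedy before (g \o f) j = is_greedy before f j.
Proof.
move=> g_mono; apply: eq_forallb => k /=.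
by rewrite (leW_mono g_mono) (inj_eq (mono_inj lexx (@le_anti _ R) g_mono)).
Qed.

Hypothesis before_anti : antisymmetric before.

Lemma is_greedy_inj {f : V -> R} {j1 j2 : V} :
  is_greedy before f j1 -> is_greedy before f j2 -> j1 = j2.
Proof.
move=> /forallP/(_ j2)/orP[lt21|/andP[/eqP e21 b12]];
  move=> /forallP/(_ j1)/orP[lt12|/andP[/eqP e12 b21]].
- by have := lt_trans lt21 lt12; rewrite ltxx.
- by move: lt21; rewrite e12 ltxx.
- by move: lt12; rewrite e21 ltxx.
- by apply: before_anti; rewrite b12 b21.
Qed.

Lemma greedy_Some {f : V -> R} {j : V} :
  is_greedy before f j -> greedy before f = Some j.
Proof.
move=> gj; rewrite /greedy; case: pickP => [k gk|/(_ j)]; last by rewrite gj.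
by rewrite (is_greedy_inj gk gj).
Qed.

End Greedy.

Lemma greedy_softmax {R : realType} {d : nat} {V : finType} (before : rel V)
  (e : V -> 'rV[R]_d) (h : 'rV[R]_d) :
  greedy before (softmax e h) = greedy before (fun k => dotp h (e k)).
Proof.
rewrite /greedy; apply: eq_pick => j.
pose Z := \sum_(i : V) expR (dotp h (e i)).
have Z_gt0 : 0 < Z.
  rewrite /Z (bigD1 j) //= ltr_wpDr ?expR_gt0 //.
  by apply: sumr_ge0 => i _; rewrite ltW ?expR_gt0.
apply: (@is_greedy_comp_mono R V before (fun x => expR x / Z)) => x y.
by rewrite ler_pM2r ?invr_gt0 // ler_expR.
Qed.

Lemma exists_is_greedy_rank_le {R : realType} {V : finType} (rk : V -> nat)
  (f : V -> R) : (0 < #|V|)%N -> exists j, is_greedy (rank_le rk) f j.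
Proof.
case/card_gt0P => v0 _.
have [m _ f_le_m] := @arg_maxP _ _ _ v0 predT f isT.
have [j /eqP fjm j_min] := @arg_minnP _ m (fun i => f i == f m) rk (eqxx _).
exists j; apply/forallP => k; rewrite fjm.
have [fkm|fkm] := eqVneq (f k) (f m).
- by rewrite fkm ltxx /rank_le j_min ?fkm.
- by rewrite orbF lt_neqAle fkm; apply: f_le_m.
Qed.

Lemma rank_le_anti {V : finType} {rk : V -> nat} :
  injective rk -> antisymmetric (rank_le rk).
Proof. by move=> rk_inj x y /anti_leq/rk_inj. Qed.

Lemma sum_le_anti {S T : finType} {rS : S -> nat} {rT : T -> nat} :
  injective rS -> injective rT -> antisymmetric (sum_le rS rT).
Proof.
by move=> rS_inj rT_inj [x|x] [y|y] //= /anti_leq => [/rS_inj|/rT_inj] ->.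
Qed.

Lemma is_greedy_inl {R : realType} {S T : finType}
  (rS : S -> nat) (rT : T -> nat) (F : S + T -> R) j :
  is_greedy (rank_le rS) (F \o inl) j -> (forall y, F (inr y) <= F (inl j)) ->
  is_greedy (sum_le rS rT) F (inl j).
Proof.
move=> /forallP gj F_le; apply/forallP => -[x|y] /=; first exact: gj.
by rewrite andbT orbC -le_eqVlt.
Qed.

Lemma ub_of_bigmax_le {R : realType} {V W : finType}
  {f : V -> R} {g : W -> R} {c : R} :
  (\big[Order.max/-oo%E]_w (g w)%:E <= \big[Order.max/-oo%E]_v (f v)%:E)%E ->
  (forall v, f v <= c) -> forall w, g w <= c.
Proof.
move=> max_le f_le w; rewrite -lee_fin.
apply: le_trans (le_bigmax _ (fun w => (g w)%:E) w) _.
apply: le_trans max_le _.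
by apply: bigmax_le => [|v _]; rewrite ?leNye ?lee_fin.
Qed.

Theorem theorem1 (R : realType) (d : nat) (S T : finType)
  (es : S -> 'rV[R]_d) (et : T -> 'rV[R]_d)
  (rS : S -> nat) (rT : T -> nat) (phi : seq S -> 'rV[R]_d) :
  (0 < d)%N -> (0 < #|S|)%N -> injective rS -> injective rT ->
  (forall h : 'rV[R]_d,
     (\big[Order.max/-oo%E]_(k : T) (dotp h (et k))%:E <=
      \big[Order.max/-oo%E]_(k : S) (dotp h (es k))%:E)%E) ->
  forall (prefix : seq S), let h := phi prefix in
  omap inl (greedy (rank_le rS) (softmax es h)) =
  greedy (sum_le rS rT) (softmax (sum_emb es et) h).
Proof.
move=> _ S_gt0 rS_inj rT_inj sup_le prefix h; rewrite !greedy_softmax.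
have [j gj] := exists_is_greedy_rank_le rS (fun k => dotp h (es k)) S_gt0.
have gST : is_greedy (sum_le rS rT) (fun k => dotp h (sum_emb es et k)) (inl j).
  apply: is_greedy_inl => // y /=.
  by apply: ub_of_bigmax_le (sup_le h) _ y => x; exact: (is_greedy_ub gj x).
rewrite (greedy_Some (rank_le_anti rS_inj) gj).
by rewrite (greedy_Some (sum_le_anti rS_inj rT_inj) gST).
Qed.
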